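(* Let $(X,d_X)$ be a discrete countable metric space and $A\subset X$ nonempty. Let $X_0,X_1$ be two copies of $X$ (the copy of $x\in X$ in $X_i$ denoted $x_i$), and define the metric $d^A$ on $X_0\sqcup X_1$ by $d^A(x_i,y_i)=d_X(x,y)$ for $i=0,1$ and $d^A(x_0,y_1)=\inf_{z\in A}[d_X(x,z)+d_X(y,z)+1]$. Identifying $\mathbb B(H_{X_0},H_{X_1})$ with $\mathbb B(H_X)$, the module $M_{X_1,d^A}$ (with $X_0$ playing the role of $X$) coincides with the norm closure in $\mathbb B(H_X)$ of $\bigcup_{k=1}^\infty C^*_u(N_k(A))$, where $N_k(A)=\{x\in X: d_X(x,A)\le k\}$ carries the restricted metric and each $T\in C^*_u(N_k(A))\subset\mathbb B(H_{N_k(A)})$ is regarded as the operator on $H_X$ equal to $T$ on $H_{N_k(A)}=\ell^2(N_k(A))$ and $0$ on its orthogonal complement.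
   Context: $H_Z=\ell^2(Z)$ with standard basis $\{\delta_z\}$. For a metric space $(Z,d_Z)$, $C^*_u(Z)$ is the norm closure in $\mathbb B(H_Z)$ of bounded operators of finite propagation ($T$ has propagation at most $L$ if $d_Z(z,z')\ge L$ implies $(\delta_z,T\delta_{z'})=0$). For a metric $d$ on $X\sqcup Y$ extending $d_X$, $M_{Y,d}$ is the norm closure in $\mathbb B(H_X,H_Y)$ of the bounded operators $T:H_X\to H_Y$ of finite propagation (i.e. there is $L$ with $(\delta_y,T\delta_x)=0$ whenever $d(x,y)\ge L$). *)

From mathcomp Require Import all_boot all_algebra.
From mathcomp Require Import all_classical all_reals.
From mathcomp Require Import Rstruct complex.
From Stdlib Require Import Reals.
Import GRing.Theory Num.Theory.

Set Implicit Arguments.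
Unset Strict Implicit.
Unset Printing Implicit Defensive.

Local Open Scope ring_scope.
Local Open Scope classical_set_scope.

Definition sqmod (z : R[i]) : R := match z with Complex a b => a ^+ 2 + b ^+ 2 end.

(* A (bounded) operator T : l^2(X) -> l^2(Y) is represented by its matrix
   K y x = (delta_y, T delta_x). *)
Definition kernel (Y X : Type) := Y -> X -> R[i].

Definition ksub (Y X : Type) (K1 K2 : kernel Y X) : kernel Y X :=
  fun y x => K1 y x - K2 y x.

(* squared operator norm of the compression of K to the finite sets
   G (domain) and F (codomain) *)
Definition cnorm2 (Y X : eqType) (K : kernel Y X) (F : seq Y) (G : seq X) : R :=
  sup [set (\sum_(y <- undup F) sqmod (\sum_(x <- undup G) K y x * v x))
      | v in [set v : X -> R[i] | \sum_(x <- undup G) sqmod (v x) <= 1]].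

Definition bounded (Y X : eqType) (K : kernel Y X) : Prop :=
  exists M : R, forall F G, cnorm2 K F G <= M.

Definition opnorm2 (Y X : eqType) (K : kernel Y X) : R :=
  sup [set r | exists F G, r = cnorm2 K F G].

Definition nclosure (Y X : eqType) (S : set (kernel Y X)) : set (kernel Y X) :=
  [set K | bounded K /\
     forall e : R, 0 < e -> exists2 K', S K' & opnorm2 (ksub K' K) < e].

Definition is_metric (X : Type) (d : X -> X -> R) : Prop :=
  [/\ forall x y, 0 <= d x y,
      forall x y, d x y = 0 <-> x = y,
      forall x y, d x y = d y x &
      forall x y z, d x z <= d x y + d y z].

Definition discrete_metric (X : Type) (d : X -> X -> R) : Prop :=
  forall x, exists2 e : R, 0 < e & forall y, d x y < e -> y = x.

(* the metric d^A on X_0 |_| X_1 = X + X (inl x = x_0, inr x = x_1) *)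
Definition dA (X : Type) (d : X -> X -> R) (A : set X) (p q : X + X) : R :=
  match p, q with
  | inl x, inl y => d x y
  | inr x, inr y => d x y
  | inl x, inr y => inf [set d x z + d y z + 1 | z in A]
  | inr y, inl x => inf [set d x z + d y z + 1 | z in A]
  end.

(* finite propagation for T : H_{X_0} -> H_{X_1} w.r.t. a metric dd on
   X_0 |_| X_1; K y x = (delta_{y_1}, T delta_{x_0}) *)
Definition finprop_mod (X : eqType) (dd : X + X -> X + X -> R) (K : kernel X X) : Prop :=
  exists L : R, forall x y, L <= dd (inl x) (inr y) -> K y x = 0.

(* M_{X_1, dd}, with B(H_{X_0}, H_{X_1}) identified with B(H_X) *)
Definition Mmod (X : eqType) (dd : X + X -> X + X -> R) : set (kernel X X) :=
  nclosure [set K | bounded K /\ finprop_mod dd K].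

Definition finprop (X : eqType) (d : X -> X -> R) (K : kernel X X) : Prop :=
  exists L : R, forall z z', L <= d z z' -> K z z' = 0.

(* K vanishes outside Z x Z, i.e. K is an operator on l^2(Z) extended by 0 *)
Definition supported_in (X : Type) (Z : set X) (K : kernel X X) : Prop :=
  forall y x, K y x <> 0 -> Z y /\ Z x.

(* C^*_u(Z) for Z subset X with the restricted metric, viewed inside B(H_X) *)
Definition Cu (X : eqType) (d : X -> X -> R) (Z : set X) : set (kernel X X) :=
  nclosure [set K | bounded K /\ supported_in Z K /\ finprop d K].

Definition Nk (X : Type) (d : X -> X -> R) (A : set X) (k : nat) : set X :=
  [set x | inf [set d x z | z in A] <= k%:R].

(* An operator T : H_{X_0} -> H_{X_1} of d^A-propagation less than L has
   nonzero matrix entries only at pairs (y, x) with d(x, A) + d(y, A) + 1 < L.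
   Hence T is supported in N_k(A) for k >= L and has d-propagation less than L.
   Conversely, an operator supported in N_k(A) with d-propagation L has
   d^A-propagation at most 2k + L + 3.  The generators of each side thus lie in
   the closure of the other side, and norm closure is idempotent. *)

From Pilot Require Import Defs.
From mathcomp Require Import all_boot all_algebra.
From mathcomp Require Import all_classical all_reals.
From mathcomp Require Import Rstruct complex.
From Stdlib Require Import Reals.
From mathcomp Require Import ring lra.
Import GRing.Theory Num.Theory order.Order.TTheory.

Set Implicit Arguments.
Unset Strict Implicit.
Unset Printing Implicit Defensive.

Local Open Scope ring_scope.
Local Open Scope classical_set_scope.

Lemma sqmod_ge0 z : 0 <= sqmod z.
Proof. by case: z => a b /=; rewrite RplusE addr_ge0 ?sqr_ge0. Qed.

Lemma sqmod0 : sqmod 0 = 0.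
Proof. by rewrite /= RplusE expr0n addr0. Qed.

Lemma sqmodN z : sqmod (- z) = sqmod z.
Proof. by case: z => a b /=; rewrite !sqrrN. Qed.

Lemma sqmodM z w : sqmod (z * w) = sqmod z * sqmod w.
Proof. by case: z => a b; case: w => c e /=; rewrite !RplusE; ring. Qed.

Lemma sqmodD z w : sqmod (z + w) <= 2 * sqmod z + 2 * sqmod w.
Proof.
case: z => a b; case: w => c e /=; rewrite !RplusE.
by have := sqr_ge0 (a - c); have := sqr_ge0 (b - e); nra.
Qed.

Lemma sqmod_sum_le (I : Type) (s : seq I) (g : I -> R[i]) :
  sqmod (\sum_(i <- s) g i) <= 2 ^+ size s * \sum_(i <- s) sqmod (g i).
Proof.
elim: s => [|a s IH]; first by rewrite !big_nil sqmod0 mulr0.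
rewrite !big_cons /= exprS.
have e1 : 1 <= 2 ^+ size s :> R by rewrite exprn_ege1 ?ler1n.
have := sqmodD (g a) (\sum_(i <- s) g i); have := sqmod_ge0 (g a).
by nra.
Qed.

Section CompressionNorms.
Variables Y X : eqType.
Implicit Types (K : kernel Y X) (F : seq Y) (G : seq X).

Lemma cnorm2_ub K F G (v : X -> R[i]) :
  \sum_(x <- undup G) sqmod (v x) <= 1 ->
  \sum_(y <- undup F) sqmod (\sum_(x <- undup G) K y x * v x) <= cnorm2 K F G.
Proof.
move=> v1; apply: sup_upper_bound; last by exists v.
split; first by eexists; exists v.
exists (\sum_(y <- undup F) 2 ^+ size (undup G) *
          \sum_(x <- undup G) sqmod (K y x)).
move=> _ [w w1 <-]; apply: ler_sum => y _.
apply: le_trans; first exact: sqmod_sum_le.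
rewrite ler_pM2l ?exprn_gt0 ?ltr0n //.
rewrite !big_seq; apply: ler_sum => x xG; rewrite sqmodM ler_piMr ?sqmod_ge0 //.
apply: le_trans w1; rewrite (bigD1_seq x) ?undup_uniq //=.
have : 0 <= \sum_(i <- undup G | i != x) sqmod (w i).
  by apply: sumr_ge0 => *; apply: sqmod_ge0.
by lra.
Qed.

Lemma cnorm2_le K F G (M : R) :
  (forall v : X -> R[i], \sum_(x <- undup G) sqmod (v x) <= 1 ->
    \sum_(y <- undup F) sqmod (\sum_(x <- undup G) K y x * v x) <= M) ->
  cnorm2 K F G <= M.
Proof.
move=> hM; apply: ge_sup => [|_ [v v1 <-]]; last exact: hM.
eexists; exists (fun=> 0) => //.
by apply: (le_trans (y := 0)) ler01; rewrite big1 // => x _; exact: sqmod0.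
Qed.

Lemma cnorm2_split K K1 K2 F G :
  (forall y x, K y x = K1 y x + K2 y x) ->
  cnorm2 K F G <= 2 * cnorm2 K1 F G + 2 * cnorm2 K2 F G.
Proof.
move=> hK; apply: cnorm2_le => v v1.
pose s (Ki : kernel Y X) y := \sum_(x <- undup G) Ki y x * v x.
have splitK y : s K y = s K1 y + s K2 y.
  by rewrite -big_split; apply: eq_bigr => x _; rewrite hK mulrDl.
apply: (le_trans (y := \sum_(y <- undup F) (2 * sqmod (s K1 y) + 2 * sqmod (s K2 y)))).
  by apply: ler_sum => y _; rewrite -/(s K y) splitK sqmodD.
have := cnorm2_ub K1 F v1; have := cnorm2_ub K2 F v1.
by rewrite big_split /= -!mulr_sumr; lra.
Qed.

Lemma cnorm2_opp K F G : cnorm2 (fun y x => - K y x) F G = cnorm2 K F G.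
Proof.
rewrite /cnorm2; congr sup; apply: eq_imagel => v _.
apply: eq_bigr => y _.
by under eq_bigr do rewrite mulNr; rewrite sumrN sqmodN.
Qed.

Lemma cnorm2_ge0 K F G : 0 <= cnorm2 K F G.
Proof.
have v1 : \sum_(x <- undup G) sqmod ((fun=> 0 : R[i]) x) <= 1.
  by apply: (le_trans (y := 0)) ler01; rewrite big1 // => x _; exact: sqmod0.
apply: le_trans (cnorm2_ub K F v1).
by rewrite big1 // => y _; rewrite big1 ?sqmod0 // => x _; rewrite mulr0.
Qed.

Lemma cnorm2_ksubrr K F G : cnorm2 (ksub K K) F G = 0.
Proof.
apply/le_anti; rewrite cnorm2_ge0 andbT; apply: cnorm2_le => v _.
by rewrite big1 // => y _; rewrite big1 ?sqmod0 // => x _; rewrite /ksub subrr mul0r.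
Qed.

Lemma cnorm2_le_opnorm2 K F G : Defs.bounded K -> cnorm2 K F G <= opnorm2 K.
Proof.
move=> [M hM]; apply: sup_upper_bound; last by exists F, G.
by split; [exists (cnorm2 K F G), F, G | exists M => _ [F' [G' ->]]].
Qed.

Lemma opnorm2_le K (M : R) : (forall F G, cnorm2 K F G <= M) -> opnorm2 K <= M.
Proof.
move=> hM; apply: ge_sup => [|_ [F [G ->]]] //.
by exists (cnorm2 K [::] [::]), [::], [::].
Qed.

Lemma bounded_ksub K1 K2 :
  Defs.bounded K1 -> Defs.bounded K2 -> Defs.bounded (ksub K1 K2).
Proof.
move=> [M1 hM1] [M2 hM2]; exists (2 * M1 + 2 * M2) => F G.
have := @cnorm2_split (ksub K1 K2) K1 (fun y x => - K2 y x) F G (fun _ _ => erefl).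
by rewrite cnorm2_opp; have := hM1 F G; have := hM2 F G; lra.
Qed.

Lemma opnorm2_ksub_trans K1 K2 K3 :
  Defs.bounded K1 -> Defs.bounded K2 -> Defs.bounded K3 ->
  opnorm2 (ksub K1 K3) <= 2 * opnorm2 (ksub K1 K2) + 2 * opnorm2 (ksub K2 K3).
Proof.
move=> b1 b2 b3; apply: opnorm2_le => F G.
have := cnorm2_le_opnorm2 F G (bounded_ksub b1 b2).
have := cnorm2_le_opnorm2 F G (bounded_ksub b2 b3).
have : cnorm2 (ksub K1 K3) F G <=
    2 * cnorm2 (ksub K1 K2) F G + 2 * cnorm2 (ksub K2 K3) F G.
  by apply: cnorm2_split => y x; rewrite /ksub addrA subrK.
by lra.
Qed.

Lemma opnorm2_ksubrr K : opnorm2 (ksub K K) = 0.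
Proof.
apply/le_anti; rewrite opnorm2_le => [|F G]; last by rewrite cnorm2_ksubrr.
rewrite -(cnorm2_ksubrr K [::] [::]) cnorm2_le_opnorm2 //.
by exists 0 => F G; rewrite cnorm2_ksubrr.
Qed.

End CompressionNorms.

Section NormClosure.
Variables Y X : eqType.
Implicit Types S T : set (kernel Y X).

Lemma nclosureS S T : S `<=` T -> nclosure S `<=` nclosure T.
Proof.
move=> ST K [bK hK]; split=> // e e0.
by have [K' SK' lt_e] := hK e e0; exists K'; first exact: ST.
Qed.

Lemma subset_nclosure S : S `<=` @Defs.bounded Y X -> S `<=` nclosure S.
Proof.
by move=> Sb K SK; split=> [|e e0]; [exact: Sb | exists K; rewrite ?opnorm2_ksubrr].
Qed.

Lemma nclosure_idem S : S `<=` @Defs.bounded Y X -> nclosure (nclosure S) = nclosure S.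
Proof.
move=> Sb; apply/seteqP; split; last by apply: subset_nclosure => K [].
move=> K [bK hK]; split=> // e e0.
have [K' [bK' hK'] lt_K'K] := hK (e / 4) ltac:(lra).
have [K'' SK'' lt_K''K'] := hK' (e / 4) ltac:(lra).
exists K'' => //.
by have := opnorm2_ksub_trans (Sb _ SK'') bK' bK; lra.
Qed.

End NormClosure.

Lemma inf_image_le (T : Type) (B : set T) (f : T -> R) z :
  (forall w, 0 <= f w) -> B z -> inf (f @` B) <= f z.
Proof. by move=> f_ge0 Bz; apply: ge_inf; [exists 0 => _ [w _ <-] | exists z]. Qed.

Lemma image_lt_inf (T : Type) (B : set T) (f : T -> R) (t : R) :
  B !=set0 -> inf (f @` B) < t -> exists2 z, B z & f z < t.
Proof.
move=> [z Bz] /inf_lt [|_ [w Bw <-]]; last by exists w.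
by exists (f z), z.
Qed.

Lemma exists_pos_nat_ge (L : R) : exists2 k : nat, (0 < k)%nat & L <= k%:R.
Proof.
have k_gt := archi_boundP (normr_ge0 L); exists (Num.bound `|L|).
  by rewrite -(ltr0n R); apply: le_lt_trans k_gt.
exact/ltW/le_lt_trans/k_gt/ler_norm.
Qed.

Section TwoCopies.
Variables (X : eqType) (d : X -> X -> R) (A : set X).
Hypotheses (hd : is_metric d) (hA : A !=set0).

Let d_ge0 x y : 0 <= d x y. Proof. by case: hd. Qed.
Let d_sym x y : d x y = d y x. Proof. by case: hd. Qed.
Let d_triangle x y z : d x z <= d x y + d y z. Proof. by case: hd. Qed.

Lemma dA_inl_inr_le x y z : A z -> dA d A (inl x) (inr y) <= d x z + d y z + 1.
Proof.
by apply: (inf_image_le (f := fun z => d x z + d y z + 1)) => w; rewrite !addr_ge0.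
Qed.

Lemma dA_inl_inr_lt x y (L : R) :
  dA d A (inl x) (inr y) < L -> exists2 z, A z & d x z + d y z + 1 < L.
Proof. exact: image_lt_inf. Qed.

Lemma Nk_le x z k : A z -> d x z <= k%:R -> Nk d A k x.
Proof. by move=> Az; apply: le_trans; apply: (inf_image_le (f := d x)). Qed.

Lemma Nk_lt x k : Nk d A k x -> exists2 z, A z & d x z < k%:R + 1.
Proof. by move=> Nx; apply: image_lt_inf => //; rewrite /Nk /= in Nx; lra. Qed.

Lemma finprop_mod_supported K : finprop_mod (dA d A) K ->
  exists2 k : nat, (0 < k)%nat & supported_in (Nk d A k) K /\ finprop d K.
Proof.
move=> [L hL].
have close x y : K y x <> 0 -> exists2 z, A z & d x z + d y z + 1 < L.
  by move=> Kyx; apply: dA_inl_inr_lt; rewrite ltNge; apply/negP => /hL.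
have [k k_gt0 Lk] := exists_pos_nat_ge L; exists k => //; split.
  move=> y x Kyx; have [z Az lt_L] := close x y Kyx.
  by split; apply: (Nk_le Az); have := d_ge0 x z; have := d_ge0 y z; lra.
exists L => y x le_L; apply/eqP; apply: contraTT le_L => /eqP Kyx.
have [z _ lt_L] := close x y Kyx.
by have := d_triangle y z x; rewrite (d_sym z x) -ltNge; lra.
Qed.

Lemma supported_finprop_mod k K :
  supported_in (Nk d A k) K -> finprop d K -> finprop_mod (dA d A) K.
Proof.
move=> hs [L hL]; exists (2 * k%:R + L + 3) => x y le_dA.
apply/eqP; apply: contraTT le_dA => /eqP Kyx.
have [_ /Nk_lt [z Az lt_k]] := hs y x Kyx.
have lt_L : d y x < L by rewrite ltNge; apply/negP => /hL.
have := dA_inl_inr_le x y Az; have := d_triangle y x z; rewrite -ltNge; lra.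
Qed.

End TwoCopies.

Local Close Scope ring_scope.

Theorem mainTheorem6 (X : countType) (d : X -> X -> R) (A : set X)
  (hd : is_metric d) (hdisc : discrete_metric d) (hA : A !=set0) :
  Mmod (dA d A) = nclosure (\bigcup_(k in [set k : nat | (0 < k)%N]) Cu d (Nk d A k)).
Proof.
set Mgen := [set K | Defs.bounded K /\ finprop_mod (dA d A) K].
have Mgen_bounded : Mgen `<=` @Defs.bounded X X by move=> K [].
have Mgen_sub : Mgen `<=` \bigcup_(k in [set k : nat | (0 < k)%N]) Cu d (Nk d A k).
  move=> K [bK /(finprop_mod_supported hd hA) [k k_gt0 [hs hf]]].
  by exists k => //; apply: subset_nclosure; [move=> ? [] | split].
have Cu_sub k : Cu d (Nk d A k) `<=` nclosure Mgen.
  apply: nclosureS => K [bK [hs hf]]; split=> //.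
  exact: supported_finprop_mod hs hf.
rewrite /Mmod -/Mgen; apply/seteqP; split; first exact: nclosureS.
rewrite -(nclosure_idem Mgen_bounded); apply: nclosureS => K [k _].
exact: Cu_sub.
Qed.
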